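(* For all $s\in\mathbb{C}$ with $\Re(s)>1$, \[\sum_{n=1}^{\infty}\frac{1}{n^{s}}\cdot\frac{1}{\omega(n)+1}\Big[\sum_{p\ \text{prime}}\frac{1}{p^{s}}+\frac{1}{\omega(n)}\sum_{p\mid n}\frac{1}{p^{s}}\Big]=\zeta(s)-1,\] with the convention that for $n=1$ the term $\frac{1}{\omega(n)}\sum_{p\mid n}p^{-s}$ (an empty sum) is $0$.
   Context: $\omega(n)$ is the number of distinct prime divisors of $n$; the sum $\sum_{p\mid n}$ runs over the primes dividing $n$; $\zeta(s)=\sum_{n\ge1}n^{-s}$. *)

From Stdlib Require Import Reals ZArith Znumtheory List Arith.
Open Scope R_scope.

Record Cplx := mkC { Re : R; Im : R }.

Definition Cadd (z w : Cplx) : Cplx := mkC (Re z + Re w) (Im z + Im w).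
Definition Csub (z w : Cplx) : Cplx := mkC (Re z - Re w) (Im z - Im w).
Definition Cmul (z w : Cplx) : Cplx :=
  mkC (Re z * Re w - Im z * Im w) (Re z * Im w + Im z * Re w).
Definition RC (x : R) : Cplx := mkC x 0.
Definition Czero : Cplx := RC 0.
Definition Cone : Cplx := RC 1.

Definition Cexp (z : Cplx) : Cplx := mkC (exp (Re z) * cos (Im z)) (exp (Re z) * sin (Im z)).

Definition npow_neg (n : nat) (s : Cplx) : Cplx :=
  Cexp (Cmul (RC (- ln (INR n))) s).

Definition Cseries_cv (f : nat -> Cplx) (l : Cplx) : Prop :=
  infinite_sum (fun k => Re (f k)) (Re l) /\ infinite_sum (fun k => Im (f k)) (Im l).

Definition primeb (p : nat) : bool :=
  if prime_dec (Z.of_nat p) then true else false.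

Definition prime_divisors (n : nat) : list nat :=
  filter (fun p => andb (primeb p) (Nat.eqb (Nat.modulo n p) 0)) (seq 1 n).

Definition omega (n : nat) : nat := length (prime_divisors n).

Definition sum_pdiv (n : nat) (s : Cplx) : Cplx :=
  fold_right (fun p acc => Cadd (npow_neg p s) acc) Czero (prime_divisors n).

(* zeta series: sum_{n>=1} n^{-s}, indexed from k = 0 with n = k+1 *)
Definition zeta_term (s : Cplx) (k : nat) : Cplx := npow_neg (S k) s.

Definition prime_term (s : Cplx) (k : nat) : Cplx :=
  if primeb k then npow_neg k s else Czero.

(* (1/omega(n)) * sum_{p|n} p^{-s}, with value 0 when omega(n) = 0 (n = 1) *)
Definition avg_pdiv (n : nat) (s : Cplx) : Cplx :=
  match omega n with
  | O => Czero
  | w => Cmul (RC (/ INR w)) (sum_pdiv n s)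
  end.

(* n-th summand of the main series, given the value P of sum_p p^{-s} *)
Definition main_term (s P : Cplx) (n : nat) : Cplx :=
  Cmul (npow_neg n s)
    (Cmul (RC (/ (INR (omega n) + 1))) (Cadd P (avg_pdiv n s))).

(* Write the [n]-th summand as [n^{-s} (a_n sum_p p^{-s} + b_n sum_(p | n) p^{-s})] with
   [a_n = 1/(omega n + 1)] and [b_n = a_n / omega n].  Collecting the terms by [m = n p], the
   coefficient of [m^{-s}] is [sum_(p | m) c(m/p, p)] with [c(n, p) = a_n + b_n [p | n]].  If
   [p^2 | m] then [omega (m/p) = omega m = w] and [c = 1/(w+1) + 1/((w+1) w) = 1/w]; if [p]
   divides [m] exactly once then [omega (m/p) = w - 1] and again [c = 1/w].  So every [m >= 2]
   gets coefficient [1], which gives [zeta(s) - 1].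
   The rearrangement is justified by absolute convergence: truncate the [n]-sum at [N] and the
   prime series at [K > N]; the pairs with [n p > N >= L^2] have [n > L] or [p > L], so they
   contribute at most a tail of [sum |n^{-s}|]. *)

From Stdlib Require Import Reals ZArith Znumtheory List Arith Lia Lra Permutation.
Open Scope R_scope.

(** * Finite sums *)

Definition ind (b : bool) : R := if b then 1 else 0.

Lemma ind_bounds b : 0 <= ind b <= 1.
Proof. destruct b; simpl; lra. Qed.

Fixpoint psum (f : nat -> R) (n : nat) : R :=
  match n with O => 0 | S k => psum f k + f k end.

Lemma psum_S f n : psum f (S n) = psum f n + f n.
Proof. reflexivity. Qed.

Lemma psum_ext f g n : (forall k, (k < n)%nat -> f k = g k) -> psum f n = psum g n.
Proof.
  induction n as [|n IH]; simpl; intros H; [reflexivity|].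
  rewrite IH by (intros; apply H; lia). now rewrite H by lia.
Qed.

Lemma psum_const0 n : psum (fun _ => 0) n = 0.
Proof. induction n; simpl; [|rewrite IHn]; ring. Qed.

Lemma psum_eq0 f n : (forall k, (k < n)%nat -> f k = 0) -> psum f n = 0.
Proof. intros H. rewrite (psum_ext f (fun _ => 0)) by exact H. apply psum_const0. Qed.

Lemma psumD f g n : psum (fun k => f k + g k) n = psum f n + psum g n.
Proof. induction n; simpl; [|rewrite IHn]; ring. Qed.

Lemma psumB f g n : psum (fun k => f k - g k) n = psum f n - psum g n.
Proof. induction n; simpl; [|rewrite IHn]; ring. Qed.

Lemma psumZ c f n : psum (fun k => c * f k) n = c * psum f n.
Proof. induction n; simpl; [|rewrite IHn]; ring. Qed.

Lemma psum_le f g n : (forall k, (k < n)%nat -> f k <= g k) -> psum f n <= psum g n.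
Proof.
  induction n as [|n IH]; simpl; intros H; [lra|].
  assert (psum f n <= psum g n) by (apply IH; intros; apply H; lia).
  specialize (H n ltac:(lia)); lra.
Qed.

Lemma psum_abs f n : Rabs (psum f n) <= psum (fun k => Rabs (f k)) n.
Proof.
  induction n; simpl; [rewrite Rabs_R0; lra|].
  eapply Rle_trans; [apply Rabs_triang|lra].
Qed.

Lemma psum_ge0 f n : (forall k, 0 <= f k) -> 0 <= psum f n.
Proof. intros H; induction n; simpl; [lra|]; specialize (H n); lra. Qed.

Lemma psum_mono f n m : (forall k, 0 <= f k) -> (n <= m)%nat -> psum f n <= psum f m.
Proof. intros H Hnm; induction Hnm; simpl; [lra|]; specialize (H m); lra. Qed.

Lemma psum_swap f n m :
  psum (fun i => psum (fun j => f i j) m) n = psum (fun j => psum (fun i => f i j) n) m.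
Proof. induction n; simpl; [now rewrite psum_const0|]. now rewrite IHn, <- psumD. Qed.

Lemma psum_mul f g n m : psum (fun i => psum (fun j => f i * g j) m) n = psum f n * psum g m.
Proof. induction n; simpl; [|rewrite IHn, psumZ]; ring. Qed.

Lemma psum_delta g k M : psum (fun m => ind (Nat.eqb k m) * g m) M = ind (Nat.ltb k M) * g k.
Proof.
  induction M; simpl; [unfold ind; simpl; ring|]. rewrite IHM.
  destruct (Nat.eqb_spec k M), (Nat.ltb_spec k M), (Nat.ltb_spec k (S M));
    unfold ind; subst; try lia; ring.
Qed.

Lemma psum_Sl f n : psum f (S n) = f O + psum (fun k => f (S k)) n.
Proof. induction n; simpl in *; [|rewrite IHn]; ring. Qed.

Lemma psum_add_range f a d : psum f (a + d) = psum f a + psum (fun k => f (a + k)%nat) d.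
Proof.
  induction d; simpl; [rewrite Nat.add_0_r; ring|].
  rewrite Nat.add_succ_r; simpl; rewrite IHd; ring.
Qed.

Lemma sum_f_R0_psum f n : sum_f_R0 f n = psum f (S n).
Proof. induction n; simpl; [|rewrite IHn; simpl]; ring. Qed.

Lemma psum_filter f g n :
  psum (fun k => ind (f k) * g k) n = fold_right Rplus 0 (map g (filter f (seq 0 n))).
Proof.
  assert (Happ : forall l1 l2, fold_right Rplus 0 (l1 ++ l2)
                                 = fold_right Rplus 0 l1 + fold_right Rplus 0 l2).
  { induction l1; simpl; intros; [|rewrite IHl1]; ring. }
  induction n; [reflexivity|]. cbn [psum].
  rewrite seq_S, filter_app, map_app, Happ, IHn.
  simpl; unfold ind; destruct (f n); simpl; ring.
Qed.

Lemma filter_seq_support (f : nat -> bool) m K :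
  f O = false -> (forall k, (m < k)%nat -> f k = false) -> (m < K)%nat ->
  filter f (seq 0 K) = filter f (seq 1 m).
Proof.
  intros H0 Hk HK. replace K with (S m + (K - S m))%nat by lia.
  rewrite seq_app, filter_app.
  rewrite (filter_ext_in f (fun _ => false) (seq (0 + S m) _)), filter_false.
  - rewrite app_nil_r; simpl; rewrite H0; reflexivity.
  - intros x Hx; apply in_seq in Hx; apply Hk; lia.
Qed.

(** * Prime divisors and omega *)

Lemma primeb_spec p : primeb p = true <-> prime (Z.of_nat p).
Proof. unfold primeb; destruct (prime_dec (Z.of_nat p)); split; auto; discriminate. Qed.

Lemma primeb_ge2 p : primeb p = true -> (2 <= p)%nat.
Proof. intros H; apply primeb_spec, prime_ge_2 in H; lia. Qed.

Lemma Nat_mod0_Zdivide (n q : nat) :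
  q <> O -> (Nat.modulo n q = 0%nat <-> (Z.of_nat q | Z.of_nat n)%Z).
Proof. intros Hq. rewrite <- Z.mod_divide, <- Nat2Z.inj_mod by lia. lia. Qed.

Definition is_pdiv (n p : nat) : bool := primeb p && Nat.eqb (Nat.modulo n p) 0.

Lemma is_pdivP n p :
  is_pdiv n p = true -> primeb p = true /\ (2 <= p)%nat /\ n = (p * (n / p))%nat.
Proof.
  unfold is_pdiv; intros H; apply andb_prop in H as [Hp Hm]; apply Nat.eqb_eq in Hm.
  pose proof (primeb_ge2 _ Hp). pose proof (Nat.div_mod_eq n p). rewrite Hm, Nat.add_0_r in *. auto.
Qed.

Lemma is_pdiv_large n k : (1 <= n)%nat -> (n < k)%nat -> is_pdiv n k = false.
Proof.
  intros Hn Hk. unfold is_pdiv. rewrite Nat.mod_small by lia.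
  destruct (primeb k); simpl; [apply Nat.eqb_neq; lia|reflexivity].
Qed.

Lemma in_prime_divisors (n q : nat) :
  (1 <= n)%nat -> In q (prime_divisors n) <-> is_pdiv n q = true.
Proof.
  intros Hn. unfold prime_divisors. rewrite filter_In, in_seq. split; [tauto|].
  intros H; split; auto. destruct (Nat.le_gt_cases q n); [|rewrite is_pdiv_large in H by lia];
  try discriminate. pose proof (is_pdivP _ _ H); lia.
Qed.

Lemma is_pdiv_mul_prime p n q : primeb p = true ->
  is_pdiv (p * n) q = true <-> is_pdiv n q = true \/ q = p.
Proof.
  intros Hp. pose proof (primeb_ge2 _ Hp). unfold is_pdiv.
  destruct (primeb q) eqn:Hq; simpl; [|split; [discriminate|intros [H1| H1]; congruence]].
  pose proof (primeb_ge2 _ Hq). apply primeb_spec in Hp, Hq.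
  rewrite !Nat.eqb_eq, !Nat_mod0_Zdivide, Nat2Z.inj_mul by lia. split.
  - intros Hd. destruct (prime_mult _ Hq _ _ Hd) as [H1|H1]; [right|left; auto].
    apply prime_div_prime in H1; auto; lia.
  - intros [H1| ->]; [apply Z.divide_mul_r|apply Z.divide_mul_l, Z.divide_refl]; auto.
Qed.

Lemma omega_perm a l : (1 <= a)%nat -> NoDup l ->
  (forall q, In q l <-> is_pdiv a q = true) -> omega a = length l.
Proof.
  intros Ha Hl H. apply Permutation_length, NoDup_Permutation; auto.
  - apply NoDup_filter, seq_NoDup.
  - intros q; rewrite in_prime_divisors, H by auto; reflexivity.
Qed.

Lemma omega_div_sq m p : (1 <= m)%nat -> is_pdiv m p = true ->
  is_pdiv (m / p) p = true -> omega (m / p) = omega m.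
Proof.
  intros Hm Hmp Hsq. destruct (is_pdivP _ _ Hmp) as (Hp & _ & Hdec).
  set (k := (m / p)%nat) in *. assert (1 <= k)%nat by (destruct k; lia).
  symmetry; apply omega_perm; auto; [apply NoDup_filter, seq_NoDup|].
  intros q. rewrite in_prime_divisors, Hdec, is_pdiv_mul_prime by auto.
  split; [|intros [H1| ->]]; auto.
Qed.

Lemma omega_div_simple m p : (1 <= m)%nat -> is_pdiv m p = true ->
  is_pdiv (m / p) p = false -> S (omega (m / p)) = omega m.
Proof.
  intros Hm Hmp Hsq. destruct (is_pdivP _ _ Hmp) as (Hp & _ & Hdec).
  set (k := (m / p)%nat) in *. assert (1 <= k)%nat by (destruct k; lia).
  symmetry; apply (omega_perm m (p :: prime_divisors k)); auto.
  - constructor; [rewrite in_prime_divisors by auto; congruence|apply NoDup_filter, seq_NoDup].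
  - intros q. simpl. rewrite in_prime_divisors, Hdec, is_pdiv_mul_prime by auto.
    split; intros [H1|H1]; auto.
Qed.

Lemma exists_prime_divisor m : (2 <= m)%nat -> exists q, is_pdiv m q = true.
Proof.
  induction m as [m IH] using (well_founded_induction lt_wf). intros Hm.
  destruct (prime_dec (Z.of_nat m)) as [Hpr|Hnp].
  - exists m. unfold is_pdiv. apply primeb_spec in Hpr. rewrite Hpr, Nat.Div0.mod_same. reflexivity.
  - destruct (not_prime_divide (Z.of_nat m) ltac:(lia) Hnp) as [d [Hd Hdm]].
    destruct (IH (Z.to_nat d) ltac:(lia) ltac:(lia)) as [q Hq]. exists q.
    unfold is_pdiv in *. apply andb_prop in Hq as [Hq Hqd]. rewrite Hq; simpl.
    pose proof (primeb_ge2 _ Hq). apply Nat.eqb_eq, Nat_mod0_Zdivide in Hqd; [|lia].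
    apply Nat.eqb_eq, Nat_mod0_Zdivide; [lia|]. rewrite Z2Nat.id in Hqd by lia.
    eapply Z.divide_trans; eauto.
Qed.

Lemma omega_pos m : (2 <= m)%nat -> (1 <= omega m)%nat.
Proof.
  intros Hm. destruct (exists_prime_divisor m Hm) as [q Hq].
  apply in_prime_divisors in Hq; [|lia]. unfold omega.
  destruct (prime_divisors m); simpl in *; [contradiction|lia].
Qed.

Lemma omega_1 : omega 1 = O.
Proof.
  unfold omega, prime_divisors, primeb; simpl.
  destruct (prime_dec 1) as [H|]; [destruct (not_prime_1 H)|reflexivity].
Qed.

Lemma psum_is_pdiv m K : (1 <= m)%nat -> (m < K)%nat ->
  psum (fun p => ind (is_pdiv m p)) K = INR (omega m).
Proof.
  intros Hm HK. rewrite (psum_ext _ (fun p => ind (is_pdiv m p) * 1)) by (intros; ring).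
  rewrite psum_filter, (filter_seq_support _ m); auto; [|intros; apply is_pdiv_large; lia].
  unfold omega; change (filter (is_pdiv m) (seq 1 m)) with (prime_divisors m).
  induction (prime_divisors m) as [|a l IHl]; simpl; [reflexivity|].
  rewrite IHl. destruct (length l); simpl; ring.
Qed.

(** * Regrouping the summands by [m = n p] *)

Definition weight_all (n : nat) : R := / (INR (omega n) + 1).

Definition weight_div (n : nat) : R :=
  if Nat.eqb (omega n) 0 then 0 else weight_all n * / INR (omega n).

(* The coefficient of [(n p)^{-s}] in
   [n^{-s} (weight_all n * sum_(p prime) p^{-s} + weight_div n * sum_(p | n) p^{-s})]. *)
Definition pair_weight (n p : nat) : R :=
  weight_all n * ind (primeb p) + weight_div n * ind (is_pdiv n p).

Lemma pair_weight_div m p : (1 <= m)%nat -> is_pdiv m p = true ->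
  pair_weight (m / p) p = / INR (omega m).
Proof.
  intros Hm Hmp. destruct (is_pdivP _ _ Hmp) as (Hp & Hp2 & Hdec).
  assert (Hw : (1 <= omega m)%nat) by (apply omega_pos; destruct (m / p)%nat; lia).
  unfold pair_weight, weight_div, weight_all. rewrite Hp.
  destruct (is_pdiv (m / p) p) eqn:Hsq.
  - rewrite (omega_div_sq m p) by auto.
    destruct (Nat.eqb_spec (omega m) 0); [lia|].
    assert (0 < INR (omega m)) by (apply lt_0_INR; lia). unfold ind; field; lra.
  - rewrite <- (omega_div_simple m p Hm Hmp Hsq), S_INR.
    pose proof (pos_INR (omega (m / p))). unfold ind; field; lra.
Qed.

Lemma psum_pair_weight_divisors m K : (m < K)%nat ->
  psum (fun p => ind (is_pdiv m p) * ind (Nat.leb 1 (m / p)) * pair_weight (m / p) p) K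
  = ind (Nat.leb 2 m).
Proof.
  intros HK. destruct m as [|m].
  { apply psum_eq0. intros k _. rewrite Nat.Div0.div_0_l. unfold ind at 2; simpl; ring. }
  rewrite (psum_ext _ (fun p => / INR (omega (S m)) * ind (is_pdiv (S m) p))).
  - rewrite psumZ, psum_is_pdiv by lia. destruct m as [|m].
    + rewrite omega_1; simpl; ring.
    + assert (1 <= omega (S (S m)))%nat by (apply omega_pos; lia).
      assert (0 < INR (omega (S (S m)))) by (apply lt_0_INR; lia).
      unfold ind; simpl; field; lra.
  - intros p _. destruct (is_pdiv (S m) p) eqn:Hmp; [|unfold ind; ring].
    rewrite pair_weight_div by (auto; lia).
    destruct (is_pdivP _ _ Hmp) as (_ & _ & Hdec).
    destruct (Nat.leb_spec 1 (S m / p)); [|lia]. unfold ind; ring.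
Qed.

Lemma psum_pair_weight_fiber N m p : (m <= N)%nat ->
  psum (fun n => ind (Nat.leb 1 n) * ind (Nat.eqb (n * p) m) * pair_weight n p) (S N)
  = ind (is_pdiv m p) * ind (Nat.leb 1 (m / p)) * pair_weight (m / p) p.
Proof.
  intros HmN. destruct (primeb p) eqn:Hp.
  2:{ rewrite psum_eq0.
      - unfold is_pdiv; rewrite Hp; unfold ind; simpl; ring.
      - intros n _. unfold pair_weight, is_pdiv. rewrite Hp. unfold ind; simpl; ring. }
  pose proof (primeb_ge2 _ Hp).
  rewrite (psum_ext _ (fun n => ind (Nat.eqb (m / p) n) *
      (ind (Nat.eqb (m mod p) 0) * ind (Nat.leb 1 (m / p)) * pair_weight (m / p) p))).
  - rewrite psum_delta. unfold is_pdiv. rewrite Hp. simpl.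
    assert (m / p <= m)%nat by (apply Nat.Div0.div_le_upper_bound; nia).
    destruct (Nat.ltb_spec (m / p) (S N)); [|lia]. unfold ind at 1; simpl; ring.
  - intros n _. destruct (Nat.eqb_spec (n * p) m) as [<-|E].
    + rewrite Nat.Div0.mod_mul, Nat.div_mul, Nat.eqb_refl by lia. simpl; ring.
    + destruct (Nat.eqb_spec (m / p) n) as [<-|]; [|unfold ind; simpl; ring].
      destruct (Nat.eqb_spec (m mod p) 0) as [E3|]; [|unfold ind; simpl; ring].
      exfalso. apply E. pose proof (Nat.div_mod_eq m p). rewrite E3 in *. lia.
Qed.

Lemma psum_regroup_pairs (h : nat -> R) N K : (N < K)%nat ->
  psum (fun m => ind (Nat.leb 2 m) * h m) (S N) =
  psum (fun n => ind (Nat.leb 1 n) *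
    psum (fun p => pair_weight n p * ind (Nat.leb (n * p) N) * h (n * p)%nat) K) (S N).
Proof.
  intros HK. symmetry.
  rewrite (psum_ext _ (fun n => psum (fun p => psum (fun m =>
      ind (Nat.leb 1 n) * ind (Nat.eqb (n * p) m) * pair_weight n p * h m) (S N)) K)).
  2:{ intros n _. rewrite <- psumZ. apply psum_ext. intros p _.
      rewrite (psum_ext _ (fun m => (ind (Nat.leb 1 n) * pair_weight n p) *
                                    (ind (Nat.eqb (n * p) m) * h m))) by (intros; ring).
      rewrite psumZ, psum_delta.
      replace (Nat.ltb (n * p) (S N)) with (Nat.leb (n * p) N); [ring|].
      destruct (Nat.leb_spec (n * p) N), (Nat.ltb_spec (n * p) (S N)); auto; lia. }
  rewrite (psum_ext _ (fun n => psum (fun m => psum (fun p =>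
      ind (Nat.leb 1 n) * ind (Nat.eqb (n * p) m) * pair_weight n p * h m) K) (S N)))
    by (intros; apply psum_swap).
  rewrite psum_swap. apply psum_ext. intros m Hm. rewrite psum_swap.
  rewrite (psum_ext _ (fun p => h m * psum (fun n =>
      ind (Nat.leb 1 n) * ind (Nat.eqb (n * p) m) * pair_weight n p) (S N))).
  2:{ intros p _. rewrite <- psumZ. apply psum_ext. intros; ring. }
  rewrite psumZ, (psum_ext _ _ K (fun p _ => psum_pair_weight_fiber N m p ltac:(lia))).
  rewrite psum_pair_weight_divisors by lia. ring.
Qed.

(** * Complex arithmetic and [n^{-s}] *)

Lemma Cplx_ext z w : Re z = Re w -> Im z = Im w -> z = w.
Proof. destruct z, w; simpl; intros; subst; reflexivity. Qed.

Fixpoint Cpsum (f : nat -> Cplx) (n : nat) : Cplx :=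
  match n with O => Czero | S k => Cadd (Cpsum f k) (f k) end.

Definition Cnorm1 (z : Cplx) : R := Rabs (Re z) + Rabs (Im z).

Lemma Cnorm1_ge0 z : 0 <= Cnorm1 z.
Proof. unfold Cnorm1. pose proof (Rabs_pos (Re z)). pose proof (Rabs_pos (Im z)). lra. Qed.

Lemma Cnorm1_mul z w : Cnorm1 (Cmul z w) <= Cnorm1 z * Cnorm1 w.
Proof.
  unfold Cnorm1, Cmul; simpl.
  pose proof (Rabs_triang (Re z * Re w) (- (Im z * Im w))).
  pose proof (Rabs_triang (Re z * Im w) (Im z * Re w)).
  rewrite Rabs_Ropp in H. rewrite !Rabs_mult in *.
  pose proof (Rabs_pos (Re z)). pose proof (Rabs_pos (Im z)).
  pose proof (Rabs_pos (Re w)). pose proof (Rabs_pos (Im w)).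
  unfold Rminus. nra.
Qed.

Lemma Cmul_Caddr z w v : Cmul z (Cadd w v) = Cadd (Cmul z w) (Cmul z v).
Proof. apply Cplx_ext; simpl; ring. Qed.

Lemma Cmul_Csubr z w v : Cmul z (Csub w v) = Csub (Cmul z w) (Cmul z v).
Proof. apply Cplx_ext; simpl; ring. Qed.

Lemma Cmul_0r z : Cmul z Czero = Czero.
Proof. apply Cplx_ext; simpl; ring. Qed.

Lemma Cmul_Cpsum z f n : Cmul z (Cpsum f n) = Cpsum (fun k => Cmul z (f k)) n.
Proof. induction n; simpl; [apply Cmul_0r|now rewrite Cmul_Caddr, IHn]. Qed.

Lemma Cexp_add z v : Cexp (Cadd z v) = Cmul (Cexp z) (Cexp v).
Proof. apply Cplx_ext; simpl; rewrite exp_plus, ?cos_plus, ?sin_plus; ring. Qed.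

(* Real and imaginary parts are treated at once as real-linear functionals bounded by [Cnorm1]. *)
Record Rlinear (phi : Cplx -> R) : Prop := {
  Rlinear_add : forall z v, phi (Cadd z v) = phi z + phi v;
  Rlinear_sub : forall z v, phi (Csub z v) = phi z - phi v;
  Rlinear_0 : phi Czero = 0;
  Rlinear_scal : forall r z, phi (Cmul (RC r) z) = r * phi z;
  Rlinear_bound : forall z, Rabs (phi z) <= Cnorm1 z }.

Lemma Rlinear_Re : Rlinear Re.
Proof. split; intros; simpl; try ring. unfold Cnorm1. pose proof (Rabs_pos (Im z)). lra. Qed.

Lemma Rlinear_Im : Rlinear Im.
Proof. split; intros; simpl; try ring. unfold Cnorm1. pose proof (Rabs_pos (Re z)). lra. Qed.

Lemma Rlinear_Cpsum phi f n : Rlinear phi -> phi (Cpsum f n) = psum (fun k => phi (f k)) n.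
Proof.
  intros H. induction n; simpl; [apply (Rlinear_0 _ H)|].
  now rewrite (Rlinear_add _ H), IHn.
Qed.

(* [npow_mod s n = |n^{-s}|] for [n >= 1]; since [ln 0 = 0] in Rocq, also [npow_mod s 0 = 1]. *)
Definition npow_mod (s : Cplx) (n : nat) : R := exp (- ln (INR n) * Re s).

Lemma npow_mod_gt0 s n : 0 < npow_mod s n.
Proof. apply exp_pos. Qed.

Lemma Cnorm1_npow_neg s n : Cnorm1 (npow_neg n s) <= 2 * npow_mod s n.
Proof.
  unfold Cnorm1, npow_neg, Cexp, npow_mod; simpl.
  replace (- ln (INR n) * Re s - 0 * Im s) with (- ln (INR n) * Re s) by ring.
  set (t := - ln (INR n) * Im s + 0 * Re s).
  pose proof (exp_pos (- ln (INR n) * Re s)).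
  rewrite !Rabs_mult, (Rabs_right (exp _)) by lra.
  assert (Rabs (cos t) <= 1) by (apply Rabs_le, COS_bound).
  assert (Rabs (sin t) <= 1) by (apply Rabs_le, SIN_bound).
  nra.
Qed.

Lemma ln_INR_mul m n : (1 <= m)%nat -> (1 <= n)%nat ->
  ln (INR (m * n)) = ln (INR m) + ln (INR n).
Proof. intros. rewrite mult_INR. apply ln_mult; apply lt_0_INR; lia. Qed.

Lemma npow_neg_mul s m n : (1 <= m)%nat -> (1 <= n)%nat ->
  npow_neg (m * n) s = Cmul (npow_neg m s) (npow_neg n s).
Proof.
  intros Hm Hn. unfold npow_neg. rewrite <- Cexp_add, ln_INR_mul by auto.
  f_equal; apply Cplx_ext; simpl; ring.
Qed.

Lemma npow_mod_mul s m n : (1 <= m)%nat -> (1 <= n)%nat ->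
  npow_mod s (m * n) = npow_mod s m * npow_mod s n.
Proof. intros. unfold npow_mod. rewrite ln_INR_mul, <- exp_plus by auto. f_equal; ring. Qed.

Lemma npow_neg_1 s : npow_neg 1 s = Cone.
Proof.
  unfold npow_neg, Cexp; simpl. rewrite ln_1.
  apply Cplx_ext; simpl; rewrite Ropp_0, !Rmult_0_l, Rminus_0_r, Rplus_0_r, exp_0;
    [rewrite cos_0|rewrite sin_0]; ring.
Qed.

Lemma npow_mod_1 s : npow_mod s 1 = 1.
Proof. unfold npow_mod; simpl. rewrite ln_1, Ropp_0, Rmult_0_l. apply exp_0. Qed.

(** * Absolute convergence *)

Definition abs_zeta_psum (s : Cplx) (n : nat) : R :=
  psum (fun k => ind (Nat.leb 1 k) * npow_mod s k) n.

Lemma abs_zeta_term_ge0 s k : 0 <= ind (Nat.leb 1 k) * npow_mod s k.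
Proof. pose proof (ind_bounds (Nat.leb 1 k)). pose proof (npow_mod_gt0 s k). nra. Qed.

Lemma abs_zeta_psum_S s n : abs_zeta_psum s n <= abs_zeta_psum s (S n).
Proof. unfold abs_zeta_psum; cbn [psum]. pose proof (abs_zeta_term_ge0 s n). lra. Qed.

Lemma abs_zeta_psum_SS s k : abs_zeta_psum s (S (S k)) = abs_zeta_psum s (S k) + npow_mod s (S k).
Proof. unfold abs_zeta_psum; cbn [psum]. change (ind (Nat.leb 1 (S k))) with 1. ring. Qed.

Lemma abs_zeta_psum_2 s : abs_zeta_psum s 2 = 1.
Proof. unfold abs_zeta_psum; simpl. rewrite npow_mod_1. unfold ind; simpl; ring. Qed.

Lemma ln_le_sub1 x : 0 < x -> ln x <= x - 1.
Proof. intros Hx. pose proof (exp_ineq1_le (ln x)). rewrite exp_ln in H by auto. lra. Qed.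

(* Comparison with [int_{k+1}^{k+2} t^{-sigma} dt], with [sigma = Re s]. *)
Lemma npow_mod_le_telescope s k : 1 < Re s ->
  (Re s - 1) * npow_mod s (S (S k))
  <= exp ((1 - Re s) * ln (INR (S k))) - exp ((1 - Re s) * ln (INR (S (S k)))).
Proof.
  intros Hs. unfold npow_mod.
  set (M := INR (S k)). set (N := INR (S (S k))).
  assert (HM : 0 < M) by (apply lt_0_INR; lia).
  assert (HN : N = M + 1) by (unfold N, M; rewrite (S_INR (S k)); ring).
  set (x := ln M). set (y := ln N).
  assert (Hxy : x - y <= - / N).
  { assert (x = y + ln (M / N)).
    { unfold x, y. rewrite <- ln_mult by (try apply Rdiv_lt_0_compat; lra). f_equal. field. lra. }
    pose proof (ln_le_sub1 (M / N) ltac:(apply Rdiv_lt_0_compat; lra)).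
    replace (M / N - 1) with (- / N) in H0 by (rewrite HN; field; lra). lra. }
  assert (Ey : exp y = N) by (apply exp_ln; lra).
  assert (E1 : exp ((1 - Re s) * x) = exp ((1 - Re s) * y) * exp ((Re s - 1) * (y - x))).
  { rewrite <- exp_plus. f_equal. ring. }
  assert (E2 : exp (- y * Re s) = exp ((1 - Re s) * y) * / N).
  { rewrite <- Ey, <- exp_Ropp, <- exp_plus. f_equal. ring. }
  rewrite E1, E2.
  pose proof (exp_ineq1_le ((Re s - 1) * (y - x))).
  assert (0 < exp ((1 - Re s) * y)) by apply exp_pos.
  assert (0 < / N) by (apply Rinv_0_lt_compat; lra).
  assert ((Re s - 1) * / N <= (Re s - 1) * (y - x)) by (apply Rmult_le_compat_l; lra).
  nra.
Qed.

Lemma abs_zeta_psum_le s n : 1 < Re s -> abs_zeta_psum s n <= 1 + / (Re s - 1).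
Proof.
  intros Hs. set (v k := exp ((1 - Re s) * ln (INR k))).
  assert (Htele : forall k, (Re s - 1) * (abs_zeta_psum s (S (S k)) - 1) <= 1 - v (S k)).
  { induction k.
    - rewrite abs_zeta_psum_2. unfold v; simpl. rewrite ln_1, Rmult_0_r, exp_0. lra.
    - pose proof (npow_mod_le_telescope s k Hs).
      rewrite abs_zeta_psum_SS. unfold v in *. lra. }
  assert (abs_zeta_psum s n <= abs_zeta_psum s (S (S n))).
  { unfold abs_zeta_psum. apply psum_mono; [apply abs_zeta_term_ge0|lia]. }
  specialize (Htele n). assert (0 < v (S n)) by apply exp_pos.
  assert (abs_zeta_psum s (S (S n)) - 1 <= / (Re s - 1)).
  { apply (Rmult_le_reg_l (Re s - 1)); [lra|]. rewrite Rinv_r by lra. lra. }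
  lra.
Qed.

Lemma abs_zeta_psum_cv s : 1 < Re s -> exists W,
  (forall n, abs_zeta_psum s n <= W) /\ 1 <= W /\
  (forall eps, eps > 0 -> exists L, forall n, (n >= L)%nat -> W - abs_zeta_psum s n < eps).
Proof.
  intros Hs. assert (Hg : Un_growing (abs_zeta_psum s)) by exact (abs_zeta_psum_S s).
  destruct (growing_cv _ Hg) as [W HW].
  { exists (1 + / (Re s - 1)). intros x [i ->]. apply abs_zeta_psum_le, Hs. }
  exists W. repeat split.
  - intros n; apply growing_ineq; auto.
  - rewrite <- (abs_zeta_psum_2 s). apply growing_ineq; auto.
  - intros eps Heps. destruct (HW eps Heps) as [L HL]. exists L. intros n Hn.
    specialize (HL n Hn). unfold Rdist in HL. pose proof (growing_ineq _ _ Hg HW n).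
    rewrite Rabs_left1 in HL by lra. lra.
Qed.

Lemma abs_zeta_tail_le s W L M : (forall n, abs_zeta_psum s n <= W) ->
  psum (fun k => ind (Nat.ltb L k) * npow_mod s k) M <= W - abs_zeta_psum s (S L).
Proof.
  intros HW. pose proof (HW (S L)).
  assert (Hhead : forall M', (M' <= S L)%nat ->
                  psum (fun k => ind (Nat.ltb L k) * npow_mod s k) M' = 0).
  { intros M' HM'. apply psum_eq0. intros k Hk. destruct (Nat.ltb_spec L k); [lia|]. simpl; ring. }
  destruct (Nat.le_gt_cases M (S L)); [rewrite Hhead by auto; lra|].
  replace M with (S L + (M - S L))%nat by lia. specialize (HW (S L + (M - S L))%nat).
  unfold abs_zeta_psum in *. rewrite !psum_add_range, Hhead in * by lia.
  rewrite (psum_ext (fun k => ind (Nat.leb 1 (S L + k)) * _)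
                    (fun k => ind (Nat.ltb L (S L + k)) * npow_mod s (S L + k))) in HW; [lra|].
  intros k _. destruct (Nat.leb_spec 1 (S L + k)), (Nat.ltb_spec L (S L + k)); try lia.
  reflexivity.
Qed.

Lemma series_bounded_nonneg_cv (u : nat -> R) B : (forall k, 0 <= u k) ->
  (forall n, psum u n <= B) -> exists l, Un_cv (sum_f_R0 u) l.
Proof.
  intros H0 HB. destruct (growing_cv (sum_f_R0 u)) as [l Hl]; [| |now exists l].
  - intros n; simpl; specialize (H0 (S n)); lra.
  - exists B. intros x [i ->]. rewrite sum_f_R0_psum. apply HB.
Qed.

Lemma series_dominated_cv (u g : nat -> R) B : (forall k, Rabs (u k) <= g k) ->
  (forall n, psum g n <= B) -> exists l, infinite_sum u l.
Proof.
  intros H HB. assert (Hug : forall k, - g k <= u k <= g k)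
    by (intros k; specialize (H k); unfold Rabs in H; destruct (Rcase_abs (u k)); lra).
  destruct (series_bounded_nonneg_cv (fun k => u k + g k) (2 * B)) as [l1 H1].
  - intros k; specialize (Hug k); lra.
  - intros n. rewrite psumD. specialize (HB n).
    assert (psum u n <= psum g n) by (apply psum_le; intros k _; apply Hug). lra.
  - destruct (series_bounded_nonneg_cv g B) as [l2 H2]; auto.
    { intros k; specialize (Hug k); lra. }
    exists (l1 - l2). intros eps Heps. destruct (CV_minus _ _ _ _ H1 H2 eps Heps) as [N HN].
    exists N. intros n Hn. specialize (HN n Hn). rewrite <- minus_sum in HN.
    erewrite sum_eq in HN; [exact HN|]. intros; simpl; ring.
Qed.

Lemma Cseries_dominated_cv (f : nat -> Cplx) g B : (forall k, Cnorm1 (f k) <= g k) ->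
  (forall n, psum g n <= B) -> exists l, Cseries_cv f l.
Proof.
  intros H HB.
  destruct (series_dominated_cv (fun k => Re (f k)) g B) as [a Ha]; auto.
  { intros k. pose proof (Rlinear_bound _ Rlinear_Re (f k)). specialize (H k). lra. }
  destruct (series_dominated_cv (fun k => Im (f k)) g B) as [b Hb]; auto.
  { intros k. pose proof (Rlinear_bound _ Rlinear_Im (f k)). specialize (H k). lra. }
  exists (mkC a b). split; assumption.
Qed.

Lemma Cseries_cv_remainder f P : Cseries_cv f P ->
  forall eta, eta > 0 -> exists K0, forall K, (K >= K0)%nat -> Cnorm1 (Csub P (Cpsum f K)) < eta.
Proof.
  intros [HR HI] eta He.
  destruct (HR (eta / 2)) as [K1 H1]; [lra|]. destruct (HI (eta / 2)) as [K2 H2]; [lra|].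
  exists (S (max K1 K2)). intros [|k] HK; [lia|].
  specialize (H1 k ltac:(lia)). specialize (H2 k ltac:(lia)). unfold Rdist in *.
  rewrite sum_f_R0_psum, <- (Rlinear_Cpsum _ _ _ Rlinear_Re) in H1.
  rewrite sum_f_R0_psum, <- (Rlinear_Cpsum _ _ _ Rlinear_Im) in H2.
  unfold Cnorm1, Csub; cbn [Re Im]. rewrite (Rabs_minus_sym (Re P)), (Rabs_minus_sym (Im P)). lra.
Qed.

(** * Truncation estimates *)

Lemma main_term_expand s P m : main_term s P m =
  Cadd (Cmul (RC (weight_all m)) (Cmul (npow_neg m s) P))
       (Cmul (RC (weight_div m)) (Cmul (npow_neg m s) (sum_pdiv m s))).
Proof.
  unfold main_term, avg_pdiv, weight_div, weight_all.
  destruct (omega m); simpl; apply Cplx_ext; simpl; ring.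
Qed.

Lemma Rlinear_npow_sum_pdiv phi s n K : Rlinear phi -> (1 <= n)%nat -> (n < K)%nat ->
  phi (Cmul (npow_neg n s) (sum_pdiv n s))
  = psum (fun p => ind (is_pdiv n p) * phi (npow_neg (n * p) s)) K.
Proof.
  intros H Hn HK. rewrite psum_filter, (filter_seq_support _ n); auto;
    [|intros; apply is_pdiv_large; lia].
  unfold sum_pdiv. change (filter (is_pdiv n) (seq 1 n)) with (prime_divisors n).
  assert (Hl : forall p, In p (prime_divisors n) -> (1 <= p)%nat).
  { intros p Hp. apply in_prime_divisors in Hp; auto. pose proof (is_pdivP _ _ Hp); lia. }
  induction (prime_divisors n) as [|p l IHl]; simpl.
  - rewrite Cmul_0r. apply (Rlinear_0 _ H).
  - rewrite Cmul_Caddr, (Rlinear_add _ H), IHl, npow_neg_mul by (simpl in Hl; auto).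
    reflexivity.
Qed.

Lemma Rlinear_npow_prime_psum phi s m K : Rlinear phi -> (1 <= m)%nat ->
  phi (Cmul (npow_neg m s) (Cpsum (prime_term s) K))
  = psum (fun p => ind (primeb p) * phi (npow_neg (m * p) s)) K.
Proof.
  intros H Hm. rewrite Cmul_Cpsum, (Rlinear_Cpsum _ _ _ H). apply psum_ext. intros p _.
  unfold prime_term. destruct (primeb p) eqn:Hp.
  - rewrite npow_neg_mul by (auto; apply primeb_ge2 in Hp; lia). unfold ind; ring.
  - rewrite Cmul_0r, (Rlinear_0 _ H). unfold ind; ring.
Qed.

Lemma weight_all_bounds n : 0 <= weight_all n <= 1.
Proof.
  unfold weight_all. pose proof (pos_INR (omega n)). split.
  - left; apply Rinv_0_lt_compat; lra.
  - rewrite <- Rinv_1. apply Rinv_le_contravar; lra.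
Qed.

Lemma weight_div_bounds n : 0 <= weight_div n <= 1.
Proof.
  unfold weight_div. destruct (Nat.eqb_spec (omega n) 0); [lra|].
  pose proof (weight_all_bounds n). assert (1 <= INR (omega n)) by (apply (le_INR 1); lia).
  assert (0 < / INR (omega n) <= 1).
  { split; [apply Rinv_0_lt_compat; lra|rewrite <- Rinv_1; apply Rinv_le_contravar; lra]. }
  nra.
Qed.

Lemma pair_weight_bounds n p : 0 <= pair_weight n p <= 2 * ind (Nat.leb 1 p).
Proof.
  unfold pair_weight. pose proof (weight_all_bounds n). pose proof (weight_div_bounds n).
  destruct (primeb p) eqn:Hp.
  - pose proof (primeb_ge2 _ Hp). destruct (Nat.leb_spec 1 p); [|lia].
    pose proof (ind_bounds (is_pdiv n p)). change (ind true) with 1. nra.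
  - unfold is_pdiv. rewrite Hp, Bool.andb_false_l. change (ind false) with 0.
    pose proof (ind_bounds (Nat.leb 1 p)). lra.
Qed.

Lemma main_psum_decomp phi s P N K : Rlinear phi -> (N < K)%nat ->
  psum (fun m => ind (Nat.leb 1 m) * phi (main_term s P m)) (S N) =
  psum (fun m => ind (Nat.leb 1 m) *
          psum (fun p => pair_weight m p * phi (npow_neg (m * p) s)) K) (S N) +
  psum (fun m => ind (Nat.leb 1 m) *
          (weight_all m * phi (Cmul (npow_neg m s) (Csub P (Cpsum (prime_term s) K))))) (S N).
Proof.
  intros H HK. rewrite <- psumD. apply psum_ext. intros [|m] Hm; [unfold ind; simpl; ring|].
  rewrite main_term_expand, (Rlinear_add _ H), !(Rlinear_scal _ H), Cmul_Csubr, (Rlinear_sub _ H).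
  rewrite (Rlinear_npow_sum_pdiv _ s (S m) K), (Rlinear_npow_prime_psum _ s (S m) K) by (auto; lia).
  unfold pair_weight.
  rewrite (psum_ext (fun p => (weight_all (S m) * ind (primeb p)
       + weight_div (S m) * ind (is_pdiv (S m) p)) * phi (npow_neg (S m * p) s))
     (fun p => weight_all (S m) * (ind (primeb p) * phi (npow_neg (S m * p) s))
     + weight_div (S m) * (ind (is_pdiv (S m) p) * phi (npow_neg (S m * p) s)))) by (intros; ring).
  rewrite psumD, !psumZ. ring.
Qed.

Definition abs_pair_tail (s : Cplx) (N M1 M2 : nat) : R :=
  psum (fun m => psum (fun p =>
    ind (Nat.leb 1 m) * npow_mod s m * (ind (Nat.leb 1 p) * npow_mod s p) * ind (Nat.ltb N (m * p)))
    M2) M1.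

Lemma pair_tail_bound phi s N K : Rlinear phi ->
  Rabs (psum (fun m => ind (Nat.leb 1 m) *
          psum (fun p => pair_weight m p * ind (Nat.ltb N (m * p)) * phi (npow_neg (m * p) s)) K)
        (S N))
  <= 4 * abs_pair_tail s N (S N) K.
Proof.
  intros H. unfold abs_pair_tail. eapply Rle_trans; [apply psum_abs|].
  rewrite <- psumZ. apply psum_le. intros m _.
  rewrite Rabs_mult, <- psumZ. eapply Rle_trans.
  { apply Rmult_le_compat_l; [apply Rabs_pos|apply psum_abs]. }
  rewrite <- psumZ. apply psum_le. intros p _.
  pose proof (pair_weight_bounds m p) as Hc. pose proof (ind_bounds (Nat.ltb N (m * p))) as Hi.
  rewrite !Rabs_mult, (Rabs_right (ind (Nat.leb 1 m))), (Rabs_right (pair_weight m p)),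
    (Rabs_right (ind (Nat.ltb _ _))) by (apply Rle_ge, ind_bounds || lra).
  destruct m as [|m']; [change (ind (Nat.leb 1 0)) with 0; lra|].
  destruct p as [|p'].
  { change (ind (Nat.leb 1 0)) with 0 in *. assert (pair_weight (S m') 0 = 0) as -> by lra. lra. }
  change (ind (Nat.leb 1 (S _))) with 1 in *.
  assert (HA : Rabs (phi (npow_neg (S m' * S p') s))
               <= 2 * (npow_mod s (S m') * npow_mod s (S p'))).
  { rewrite <- npow_mod_mul by lia.
    eapply Rle_trans; [apply (Rlinear_bound _ H)|apply Cnorm1_npow_neg]. }
  pose proof (Rabs_pos (phi (npow_neg (S m' * S p') s))).
  pose proof (npow_mod_gt0 s (S m')). pose proof (npow_mod_gt0 s (S p')).
  assert (0 <= npow_mod s (S m') * npow_mod s (S p')) by nra.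
  set (A := Rabs _) in *. set (c := pair_weight _ _) in *. set (i := ind _) in *.
  assert (c * i * A <= 2 * i * A)
    by (apply Rmult_le_compat_r; [lra|apply Rmult_le_compat_r; lra]).
  assert (2 * i * A <= 2 * i * (2 * (npow_mod s (S m') * npow_mod s (S p')))) by nra.
  nra.
Qed.

(* If [m p > N >= L^2] then [m > L] or [p > L], so the tail is controlled by tails of
   [sum |n^{-s}|]. *)
Lemma abs_pair_tail_le s W N L M1 M2 : (forall n, abs_zeta_psum s n <= W) -> (L * L <= N)%nat ->
  abs_pair_tail s N M1 M2 <= 2 * W * (W - abs_zeta_psum s (S L)).
Proof.
  intros HW HL.
  assert (Hsplit : abs_pair_tail s N M1 M2 <=
    psum (fun m => ind (Nat.ltb L m) * npow_mod s m) M1 * abs_zeta_psum s M2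
    + abs_zeta_psum s M1 * psum (fun p => ind (Nat.ltb L p) * npow_mod s p) M2).
  { unfold abs_pair_tail, abs_zeta_psum. rewrite <- !psum_mul, <- psumD. apply psum_le.
    intros m _. rewrite <- psumD. apply psum_le. intros p _.
    pose proof (npow_mod_gt0 s m). pose proof (npow_mod_gt0 s p).
    pose proof (ind_bounds (Nat.ltb L m)). pose proof (ind_bounds (Nat.ltb L p)).
    pose proof (ind_bounds (Nat.leb 1 m)). pose proof (ind_bounds (Nat.leb 1 p)).
    destruct (Nat.ltb_spec N (m * p)).
    2:{ change (ind false) with 0. rewrite Rmult_0_r.
        apply Rplus_le_le_0_compat; apply Rmult_le_pos; apply Rmult_le_pos; lra. }
    destruct m as [|m]; [lia|]. destruct p as [|p]; [lia|].
    change (ind (Nat.leb 1 (S _))) with 1 in *. change (ind true) with 1.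
    assert (0 <= npow_mod s (S m) * (ind (Nat.ltb L (S p)) * npow_mod s (S p)))
      by (apply Rmult_le_pos; [lra|apply Rmult_le_pos; lra]).
    assert (0 <= ind (Nat.ltb L (S m)) * npow_mod s (S m) * (1 * npow_mod s (S p)))
      by (apply Rmult_le_pos; apply Rmult_le_pos; lra).
    destruct (Nat.ltb_spec L (S m)); [change (ind true) with 1 in *; lra|].
    destruct (Nat.ltb_spec L (S p)); [change (ind true) with 1 in *; lra|nia]. }
  pose proof (abs_zeta_tail_le s W L M1 HW). pose proof (abs_zeta_tail_le s W L M2 HW).
  pose proof (HW M1). pose proof (HW M2). pose proof (HW (S L)).
  assert (0 <= abs_zeta_psum s M1) by (apply psum_ge0, abs_zeta_term_ge0).
  assert (0 <= abs_zeta_psum s M2) by (apply psum_ge0, abs_zeta_term_ge0).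
  assert (Htail : forall M, 0 <= psum (fun k => ind (Nat.ltb L k) * npow_mod s k) M).
  { intros M. apply psum_ge0. intros k.
    pose proof (ind_bounds (Nat.ltb L k)). pose proof (npow_mod_gt0 s k). nra. }
  pose proof (Htail M1). pose proof (Htail M2). nra.
Qed.

Lemma prime_remainder_bound phi s D M : Rlinear phi ->
  Rabs (psum (fun m => ind (Nat.leb 1 m) * (weight_all m * phi (Cmul (npow_neg m s) D))) M)
  <= 2 * Cnorm1 D * abs_zeta_psum s M.
Proof.
  intros H. eapply Rle_trans; [apply psum_abs|]. unfold abs_zeta_psum. rewrite <- psumZ.
  apply psum_le. intros m _.
  pose proof (weight_all_bounds m). pose proof (ind_bounds (Nat.leb 1 m)).
  rewrite !Rabs_mult, (Rabs_right (ind _)), (Rabs_right (weight_all m)) by lra.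
  pose proof (Rlinear_bound _ H (Cmul (npow_neg m s) D)).
  pose proof (Cnorm1_mul (npow_neg m s) D). pose proof (Cnorm1_npow_neg s m).
  pose proof (Cnorm1_ge0 D). pose proof (Cnorm1_ge0 (npow_neg m s)).
  pose proof (Rabs_pos (phi (Cmul (npow_neg m s) D))).
  assert (Rabs (phi (Cmul (npow_neg m s) D)) <= 2 * npow_mod s m * Cnorm1 D) by nra.
  assert (weight_all m * Rabs (phi (Cmul (npow_neg m s) D)) <= 2 * npow_mod s m * Cnorm1 D) by nra.
  replace (2 * Cnorm1 D * (ind (Nat.leb 1 m) * npow_mod s m))
    with (ind (Nat.leb 1 m) * (2 * npow_mod s m * Cnorm1 D)) by ring.
  apply Rmult_le_compat_l; lra.
Qed.

Lemma main_psum_error phi s P W N K L : Rlinear phi -> (forall n, abs_zeta_psum s n <= W) ->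
  (L * L <= N)%nat -> (N < K)%nat ->
  Rabs (psum (fun m => ind (Nat.leb 1 m) * phi (main_term s P m)) (S N)
        - psum (fun m => ind (Nat.leb 2 m) * phi (npow_neg m s)) (S N))
  <= 2 * W * Cnorm1 (Csub P (Cpsum (prime_term s) K)) + 8 * W * (W - abs_zeta_psum s (S L)).
Proof.
  intros H HW HL HK.
  rewrite (main_psum_decomp _ s P N K H HK), (psum_regroup_pairs _ N K HK).
  set (D := Csub P (Cpsum (prime_term s) K)).
  set (E := psum (fun m => ind (Nat.leb 1 m) *
              (weight_all m * phi (Cmul (npow_neg m s) D))) (S N)).
  set (Rem := psum (fun m => ind (Nat.leb 1 m) * psum (fun p =>
              pair_weight m p * ind (Nat.ltb N (m * p)) * phi (npow_neg (m * p) s)) K) (S N)).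
  match goal with |- Rabs (?A + E - ?B) <= _ => assert (Hsplit : A - B = Rem) end.
  { unfold Rem. rewrite <- psumB. apply psum_ext. intros m _.
    rewrite <- Rmult_minus_distr_l, <- psumB. f_equal. apply psum_ext. intros p _.
    destruct (Nat.leb_spec (m * p) N), (Nat.ltb_spec N (m * p)); try lia;
      change (ind true) with 1; change (ind false) with 0; ring. }
  replace (_ + E - _) with (Rem + E) by lra.
  pose proof (pair_tail_bound phi s N K H) as HRem. fold Rem in HRem.
  pose proof (abs_pair_tail_le s W N L (S N) K HW HL).
  pose proof (prime_remainder_bound phi s D (S N) H) as HE. fold E in HE.
  pose proof (HW (S N)). pose proof (Cnorm1_ge0 D).
  assert (0 <= abs_zeta_psum s (S N)) by (apply psum_ge0, abs_zeta_term_ge0).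
  assert (2 * Cnorm1 D * abs_zeta_psum s (S N) <= 2 * W * Cnorm1 D) by nra.
  eapply Rle_trans; [apply Rabs_triang|]. lra.
Qed.

Lemma Rlinear_zeta_psum phi s n : Rlinear phi ->
  sum_f_R0 (fun k => phi (zeta_term s k)) n
  = phi Cone + psum (fun m => ind (Nat.leb 2 m) * phi (npow_neg m s)) (S (S n)).
Proof.
  intros H. unfold zeta_term. induction n.
  - cbn [sum_f_R0 psum]. rewrite npow_neg_1.
    change (ind (Nat.leb 2 0)) with 0. change (ind (Nat.leb 2 1)) with 0. ring.
  - cbn [sum_f_R0]. rewrite IHn, (psum_S _ (S (S n))).
    change (ind (Nat.leb 2 (S (S n)))) with 1. ring.
Qed.

Lemma main_series_psum phi s P n :
  sum_f_R0 (fun k => phi (main_term s P (S k))) n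
  = psum (fun m => ind (Nat.leb 1 m) * phi (main_term s P m)) (S (S n)).
Proof.
  rewrite sum_f_R0_psum, (psum_Sl (fun m => ind (Nat.leb 1 m) * _)).
  change (ind (Nat.leb 1 0)) with 0. rewrite Rmult_0_l, Rplus_0_l.
  apply psum_ext. intros k _. change (ind (Nat.leb 1 (S k))) with 1. ring.
Qed.

Lemma Rlinear_main_series_cv phi s P Z : Rlinear phi -> 1 < Re s ->
  infinite_sum (fun k => phi (zeta_term s k)) (phi Z) -> Cseries_cv (prime_term s) P ->
  infinite_sum (fun k => phi (main_term s P (S k))) (phi Z - phi Cone).
Proof.
  intros H hs HZ HP eps Heps.
  destruct (abs_zeta_psum_cv s hs) as (W & HW & HW1 & HWtail).
  assert (Hdelta : eps / (24 * W) > 0) by (apply Rlt_gt, Rdiv_lt_0_compat; lra).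
  assert (Hscale : 8 * W * (eps / (24 * W)) = eps / 3) by (field; lra).
  destruct (HWtail _ Hdelta) as [L HL].
  destruct (Cseries_cv_remainder _ _ HP _ Hdelta) as [K0 HK0].
  destruct (HZ (eps / 3)) as [n0 Hn0]; [lra|].
  exists (max n0 (L * L)). intros n Hn. unfold Rdist in *.
  specialize (Hn0 n ltac:(lia)). rewrite (Rlinear_zeta_psum _ _ _ H) in Hn0.
  pose proof (main_psum_error phi s P W (S n) (S (max K0 (S n))) L H HW ltac:(lia) ltac:(lia)).
  specialize (HL (S L) ltac:(lia)). specialize (HK0 (S (max K0 (S n))) ltac:(lia)).
  assert (W * (W - abs_zeta_psum s (S L)) < W * (eps / (24 * W)))
    by (apply Rmult_lt_compat_l; lra).
  assert (W * Cnorm1 (Csub P (Cpsum (prime_term s) (S (max K0 (S n))))) < W * (eps / (24 * W)))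
    by (apply Rmult_lt_compat_l; lra).
  rewrite main_series_psum.
  match goal with |- Rabs (?A - _) < _ =>
    replace (A - (phi Z - phi Cone)) with
      ((A - psum (fun m => ind (Nat.leb 2 m) * phi (npow_neg m s)) (S (S n)))
       + (phi Cone + psum (fun m => ind (Nat.leb 2 m) * phi (npow_neg m s)) (S (S n)) - phi Z))
      by ring end.
  eapply Rle_lt_trans; [apply Rabs_triang|]. lra.
Qed.

Lemma Cnorm1_prime_term s k : Cnorm1 (prime_term s k) <= 2 * (ind (Nat.leb 1 k) * npow_mod s k).
Proof.
  unfold prime_term. destruct (primeb k) eqn:Hk.
  - pose proof (primeb_ge2 _ Hk). destruct (Nat.leb_spec 1 k); [|lia].
    change (ind true) with 1. rewrite Rmult_1_l. apply Cnorm1_npow_neg.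
  - unfold Cnorm1, Czero, RC; cbn [Re Im]. rewrite Rabs_R0. pose proof (abs_zeta_term_ge0 s k). lra.
Qed.

Lemma abs_zeta_psum_Sl s n : abs_zeta_psum s (S n) = psum (fun k => npow_mod s (S k)) n.
Proof.
  unfold abs_zeta_psum. rewrite psum_Sl. change (ind (Nat.leb 1 0)) with 0.
  rewrite Rmult_0_l, Rplus_0_l. apply psum_ext. intros k _. apply Rmult_1_l.
Qed.

Theorem mainTheorem18 (s : Cplx) (hs : 1 < Re s) :
  exists P Z : Cplx,
    Cseries_cv (prime_term s) P /\
    Cseries_cv (zeta_term s) Z /\
    Cseries_cv (fun k => main_term s P (S k)) (Csub Z Cone).
Proof.
  set (B := 2 * (1 + / (Re s - 1))).
  destruct (Cseries_dominated_cv (prime_term s) (fun k => 2 * (ind (Nat.leb 1 k) * npow_mod s k)) B)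
    as [P HP].
  { apply Cnorm1_prime_term. }
  { intros n. rewrite psumZ. apply Rmult_le_compat_l; [lra|apply abs_zeta_psum_le, hs]. }
  destruct (Cseries_dominated_cv (zeta_term s) (fun k => 2 * npow_mod s (S k)) B) as [Z HZ].
  { intros k. apply Cnorm1_npow_neg. }
  { intros n. rewrite psumZ, <- abs_zeta_psum_Sl.
    apply Rmult_le_compat_l; [lra|apply abs_zeta_psum_le, hs]. }
  exists P, Z. split; [exact HP|split; [exact HZ|]]. destruct HZ as [HZre HZim].
  split.
  - rewrite (Rlinear_sub _ Rlinear_Re).
    exact (Rlinear_main_series_cv _ s P Z Rlinear_Re hs HZre HP).
  - rewrite (Rlinear_sub _ Rlinear_Im).
    exact (Rlinear_main_series_cv _ s P Z Rlinear_Im hs HZim HP).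
Qed.
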